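(* For $\mu\in V$ and $x\in\mathcal W^J$ set $c(\mu)^J_x=\sum_{u\in\mathcal W_J}xu(\mu)$. Then for every $s\in\mathcal S$, $c(\mu)^J:=(c(\mu)^J_x)_{x\in\mathcal W^J}$ lies in ${}^s\mathcal Z^J$.
   Context: Let $(\mathcal W,\mathcal S)$ be a Coxeter system with $\mathcal W$ a Weyl group, length $\ell$, reflections $\mathcal T$. $V$ is the geometric representation (real, basis $\{\alpha_s\}$, $s(v)=v-2\langle v,\alpha_s\rangle\alpha_s$ for the form $\langle\alpha_s,\alpha_t\rangle=-\cos(\pi/m_{st})$); for $t=wsw^{-1}$, $\alpha_t=w(\alpha_s)$ up to scalar; $V\subset S=\mathrm{Sym}(V)$. Fix $J\subseteq\mathcal S$ with $\mathcal W_J=\langle J\rangle$ finite; $\mathcal W^J$ minimal coset representatives, $x^J$ the representative of $x\mathcal W_J$. Graph $\mathcal G^J$: vertices $\mathcal W^J$, edge $x\to y$ iff $\ell(x)<\ell(y)$, $y\notin x\mathcal W_J$, $y=txw$ ($t\in\mathcal T$, $w\in\mathcal W_J$), labelled $\mathbb R\alpha_t$. $\mathcal Z^J=\{(z_x)\in\prod_{x\in\mathcal W^J}S: z_x-z_y\in\alpha_tS$ for each edge labelled $\mathbb R\alpha_t\}$. ${}_s\sigma((z_x))=(\tau_s(z_{(sx)^J}))_x$ with $\tau_s$ the automorphism of $S$ induced by $s$; ${}^s\mathcal Z^J$ is the subalgebra of ${}_s\sigma$-invariants. *)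

From Stdlib Require Import Reals.
From mathcomp Require Import all_boot all_algebra.
From mathcomp Require Import mpoly.
From mathcomp Require Import Rstruct.

Set Implicit Arguments.
Unset Strict Implicit.
Unset Printing Implicit Defensive.
Import GRing.Theory.
Local Open Scope ring_scope.

Section Coxeter.

(* A Coxeter system of rank n given by its Coxeter matrix m;
   the value 0 encodes m_st = infinity. *)
Variables (n : nat) (m : 'I_n -> 'I_n -> nat).

Definition coxeter_matrix : Prop :=
  forall i j : 'I_n, m i j = m j i /\ (m i j == 1%N) = (i == j).

Definition crystallographic : Prop :=
  forall i j : 'I_n, i != j -> (m i j \in [:: 2; 3; 4; 6; 0])%N.

Definition gram : 'M[R]_n :=
  \matrix_(i, j) (if m i j == 0%N then -1
                  else - cos (PI / INR (m i j))%R).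

Definition alpha (i : 'I_n) : 'cV[R]_n := delta_mx i 0.

(* s_i(v) = v - 2 <v, alpha_i> alpha_i, as a matrix acting on columns *)
Definition refl (i : 'I_n) : 'M[R]_n :=
  1%:M - 2%:R *: (alpha i *m ((alpha i)^T *m gram)).

Definition word (s : seq 'I_n) : 'M[R]_n := foldr (fun i w => refl i *m w) 1%:M s.

(* W (as the image of the faithful geometric representation) *)
Definition inW (w : 'M[R]_n) : Prop := exists s, word s = w.

Definition inWJ (J : {set 'I_n}) (w : 'M[R]_n) : Prop :=
  exists s, all (fun i => i \in J) s /\ word s = w.

Definition is_length (w : 'M[R]_n) (l : nat) : Prop :=
  (exists s, size s = l /\ word s = w) /\
  (forall s, word s = w -> (l <= size s)%N).

Definition len_lt (x y : 'M[R]_n) : Prop :=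
  exists lx ly, is_length x lx /\ is_length y ly /\ (lx < ly)%N.

Definition len_le (x y : 'M[R]_n) : Prop :=
  exists lx ly, is_length x lx /\ is_length y ly /\ (lx <= ly)%N.

Definition minrep (J : {set 'I_n}) (x : 'M[R]_n) : Prop :=
  inW x /\ forall w, inWJ J w -> len_le x (x *m w).

Definition is_rep (J : {set 'I_n}) (x y : 'M[R]_n) : Prop :=
  minrep J y /\ exists w, inWJ J w /\ y = x *m w.

(* edge x -> y of G^J labelled R alpha_t, where t = v s_i v^{-1} and
   alpha_t = v(alpha_i) (up to a scalar) *)
Definition edge (J : {set 'I_n}) (x y : 'M[R]_n) (a : 'cV[R]_n) : Prop :=
  minrep J x /\ minrep J y /\ len_lt x y /\
  ~ (exists u, inWJ J u /\ y = x *m u) /\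
  exists (v : 'M[R]_n) (i : 'I_n) (w : 'M[R]_n),
    inW v /\ inWJ J w /\ y = v *m refl i *m invmx v *m x *m w /\
    a = v *m alpha i.

(* V inside S = Sym(V) = R[alpha_1, ..., alpha_n] *)
Definition linS (v : 'cV[R]_n) : {mpoly R[n]} := \sum_(i < n) v i 0 *: 'X_i.

(* tau_i : the R-algebra automorphism of S induced by s_i *)
Definition tau (i : 'I_n) (p : {mpoly R[n]}) : {mpoly R[n]} :=
  p \mPo [tuple linS (refl i *m alpha j) | j < n].

Definition inZ (J : {set 'I_n}) (z : 'M[R]_n -> {mpoly R[n]}) : Prop :=
  forall x y a, edge J x y a -> exists q, z x - z y = linS a * q.

Definition inZs (J : {set 'I_n}) (i : 'I_n) (z : 'M[R]_n -> {mpoly R[n]}) : Prop :=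
  inZ J z /\
  forall x y, minrep J x -> is_rep J (refl i *m x) y -> tau i (z y) = z x.

(* c(mu)^J_x = sum_{u in W_J} x u (mu), given an enumeration l of W_J *)
Definition cJ (l : seq 'M[R]_n) (mu : 'cV[R]_n) (x : 'M[R]_n) : {mpoly R[n]} :=
  linS (\sum_(u <- l) (x *m u *m mu)).

End Coxeter.

From HB Require Import structures.
From Stdlib Require Import Reals.
From mathcomp Require Import all_boot all_algebra.
From mathcomp Require Import mpoly.
From mathcomp Require Import Rstruct.
From mathcomp Require Import ring.

Set Implicit Arguments.
Unset Strict Implicit.
Unset Printing Implicit Defensive.
Import GRing.Theory.
Local Open Scope ring_scope.

(* Left multiplication by w in W_J permutes W_J, so c(mu)^J is W-equivariant:
   c_{t x w} = t c_x.  For a reflection t = v s_i v^-1 the vector z - t z is a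
   multiple of alpha_t = v alpha_i, which gives divisibility along every edge;
   and tau_i restricts to s_i on V, which gives invariance under the twisted
   action. *)

Section Reflections.

Variables (n : nat) (m : 'I_n -> 'I_n -> nat).
Hypothesis Hm : coxeter_matrix m.

Lemma gram_diag i : gram m i i = 1.
Proof.
rewrite /gram mxE.
have -> : m i i = 1%N by have [_ /eqP] := Hm i i; rewrite eqxx.
by rewrite (_ : INR 1 = 1) // divr1 cos_PI opprK.
Qed.

Lemma alpha_gram_alpha i : (alpha i)^T *m gram m *m alpha i = 1%:M.
Proof.
rewrite /alpha trmx_delta -rowE -colE.
have := gram_diag i; rewrite mxE => gii.
by apply/matrixP => a b; rewrite !ord1 !mxE gii.
Qed.

Lemma refl_invol i : refl m i *m refl m i = 1%:M.
Proof.
set P := alpha i *m ((alpha i)^T *m gram m).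
have PP : P *m P = P.
  by rewrite /P -mulmxA (mulmxA _ (alpha i)) alpha_gram_alpha mul1mx.
rewrite /refl -/P mulmxBl mul1mx mulmxBr mulmx1 -!scalemxAl -!scalemxAr PP.
by rewrite scalerA; apply/matrixP => a b; rewrite !mxE; ring.
Qed.

Lemma word_cat s t : word m (s ++ t) = word m s *m word m t.
Proof. by elim: s => [|j s IH] /=; rewrite ?mul1mx // IH mulmxA. Qed.

Lemma word_unit s : word m s \in unitmx.
Proof.
elim: s => [|j s IH] /=; first exact: unitmx1.
by rewrite unitmx_mul IH andbT (mulmx1_unit (refl_invol j)).1.
Qed.

Lemma inWJ_mul J w u : inWJ m J w -> inWJ m J u -> inWJ m J (w *m u).
Proof.
move=> [s [Js <-]] [t [Jt <-]]; exists (s ++ t).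
by rewrite all_cat Js Jt word_cat.
Qed.

Lemma refl_apply i (z : 'cV[R]_n) :
  refl m i *m z = z - (2 * ((alpha i)^T *m gram m *m z) 0 0) *: alpha i.
Proof.
rewrite /refl mulmxBl mul1mx -scalemxAl -(mulmxA (alpha i)).
rewrite {1}(mx11_scalar ((alpha i)^T *m gram m *m z)) mul_mx_scalar.
by rewrite scalerA.
Qed.

Lemma conj_refl_displacement v i (z : 'cV[R]_n) : v \in unitmx ->
  exists c : R, z - v *m refl m i *m invmx v *m z = c *: (v *m alpha i).
Proof.
move=> vU; exists (2 * ((alpha i)^T *m gram m *m (invmx v *m z)) 0 0).
rewrite -!mulmxA refl_apply mulmxBr mulKVmx // -scalemxAr.
by rewrite [in RHS]mulmxA opprB addrC subrK.
Qed.

End Reflections.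

Section LinearForms.

Variable n : nat.

Lemma linS_is_linear : linear (@linS n).
Proof.
move=> a u v; rewrite /linS scaler_sumr -big_split /=.
by apply: eq_bigr => j _; rewrite !mxE scalerDl scalerA.
Qed.

HB.instance Definition _ :=
  GRing.isLinear.Build R 'cV[R]_n {mpoly R[n]} _ (@linS n) linS_is_linear.

Lemma col_sum_alpha (z : 'cV[R]_n) : z = \sum_(j < n) z j 0 *: alpha j.
Proof. by rewrite {1}[z]matrix_sum_delta; apply: eq_bigr => j _; rewrite big_ord1. Qed.

Lemma tau_linS m i (z : 'cV[R]_n) : tau m i (linS z) = linS (refl m i *m z).
Proof.
rewrite /tau [linS z]/linS raddf_sum /= {2}(col_sum_alpha z).
rewrite mulmx_sumr raddf_sum /=; apply: eq_bigr => j _.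
rewrite comp_mpolyZ comp_mpolyXU -tnth_nth tnth_mktuple.
by rewrite -scalemxAr linearZ.
Qed.

End LinearForms.

Section OrbitSums.

Variables (n : nat) (m : 'I_n -> 'I_n -> nat).
Hypothesis Hm : coxeter_matrix m.
Variables (J : {set 'I_n}) (l : seq 'M[R]_n).
Hypotheses (Hl_uniq : uniq l) (Hl : forall w, inWJ m J w <-> w \in l).

Lemma big_WJ_mull (V : nmodType) (F : 'M[R]_n -> V) w :
  inWJ m J w -> \sum_(u <- l) F (w *m u) = \sum_(u <- l) F u.
Proof.
move=> Jw; have wU : w \in unitmx by case: Jw => s [_ <-]; apply: word_unit.
rewrite -(big_map (mulmx w) xpredT F); apply: perm_big.
have wl_uniq : uniq (map (mulmx w) l) by rewrite (map_inj_uniq (can_inj (mulKmx wU))).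
apply: uniq_perm => //; apply: (uniq_min_size wl_uniq _ _).2; last by rewrite size_map.
by move=> _ /mapP [u /Hl Ju ->]; apply/Hl/inWJ_mul.
Qed.

Variable mu : 'cV[R]_n.

Definition orbit_sum (x : 'M[R]_n) : 'cV[R]_n := \sum_(u <- l) x *m u *m mu.

Lemma orbit_sum_mull t x : orbit_sum (t *m x) = t *m orbit_sum x.
Proof. by rewrite /orbit_sum mulmx_sumr; apply: eq_bigr => u _; rewrite !mulmxA. Qed.

Lemma orbit_sum_mulr x w : inWJ m J w -> orbit_sum (x *m w) = orbit_sum x.
Proof.
move=> Jw; rewrite /orbit_sum -(big_WJ_mull (fun u => x *m u *m mu) Jw).
by apply: eq_bigr => u _; rewrite !mulmxA.
Qed.

End OrbitSums.

Theorem lemma4p2 (n : nat) (m : 'I_n -> 'I_n -> nat)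
    (Hm : coxeter_matrix m) (Hcr : crystallographic m)
    (J : {set 'I_n}) (l : seq 'M[R]_n)
    (Hl_uniq : uniq l) (Hl : forall w, inWJ m J w <-> w \in l)
    (mu : 'cV[R]_n) (i : 'I_n) :
  inZs m J i (cJ l mu).
Proof.
split=> [x y a [_ [_ [_ [_ [_ [j [w [[s <-] [Jw [-> ->]]]]]]]]]] |
         x y _ [_ [w [Jw ->]]]]; rewrite /cJ -!/(orbit_sum l mu _).
- rewrite (orbit_sum_mulr Hm Hl_uniq Hl _ _ Jw) orbit_sum_mull -raddfB /=.
  have [c ->] := conj_refl_displacement m j (orbit_sum l mu x) (word_unit Hm s).
  by exists c%:MP; rewrite linearZ /= mulrC mul_mpolyC.
- by rewrite (orbit_sum_mulr Hm Hl_uniq Hl _ _ Jw) orbit_sum_mull tau_linS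
     mulmxA (refl_invol Hm) mul1mx.
Qed.
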